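(* For every prime $p$ and every integer $t\ge 1$, \[ \overline{M}(p^t)=\sum_{j=1}^{p^t} f\!\left(\left\lfloor \frac{p^t}{j}\right\rfloor\right)-\sum_{j=1}^{p^{t-1}} f\!\left(\left\lfloor \frac{p^{t-1}}{j}\right\rfloor\right)+(p-1)\sum_{s=1}^{t}p^{s-1}\sum_{m=1}^{p^{t-s}} f\!\left(\left\lfloor \frac{p^t}{1+(m-1)p^s}\right\rfloor\right). \]
   Context: For a nonempty finite set $A$ of positive integers, $(A)$ denotes the greatest common divisor of the elements of $A$. For $m\in\mathbb{N}$, $f(m)$ is the number of nonempty subsets $A\subseteq\{1,2,\ldots,m\}$ with $(A)=1$. For $n\in\mathbb{N}$, \[ \overline{M}(n)=\sum_{\substack{\emptyset\ne A\subseteq\{1,\ldots,n\}\\ \gcd((A),n)=1}}\gcd((A)-1,n), \] with the convention $\gcd(0,n)=n$. *)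

From mathcomp Require Import all_boot all_order all_algebra.
Set Implicit Arguments. Unset Strict Implicit. Unset Printing Implicit Defensive.

(* A subset of {1,...,m} is encoded as A : {set 'I_m}, where i : 'I_m stands
   for the integer i.+1. *)
Definition setgcd (m : nat) (A : {set 'I_m}) : nat := \big[gcdn/0]_(i in A) i.+1.

Definition f (m : nat) : nat :=
  #|[set A : {set 'I_m} | (A != set0) && (setgcd A == 1)]|.

(* Mbar n; note gcdn 0 n = n matches the convention gcd(0,n)=n *)
Definition Mbar (n : nat) : nat :=
  \sum_(A : {set 'I_n} | (A != set0) && coprime (setgcd A) n)
     gcdn (setgcd A).-1 n.

From mathcomp Require Import all_boot all_order all_algebra.
From mathcomp Require Import zify.

Set Implicit Arguments.
Unset Strict Implicit.
Unset Printing Implicit Defensive.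

(* The subsets of {1..n} whose gcd is exactly d are the
      images of the subsets of {1..n/d} with gcd 1 under multiplication by d,
      so there are f(n/d) of them.  Grouping the terms of Mbar n by the gcd d
      of the subset gives  Mbar n = sum_{d <= n, (d,n) = 1} f(n/d) gcd(d-1,n).

   For n = p^t one has
        gcd(k, p^t) = 1 + (p-1) sum_{s=1}^t p^(s-1) [p^s | k],
      so after exchanging the sums the weight gcd(d-1, p^t) splits into the
      plain coprime sum plus, for each s, the sum over d = 1 + (m-1) p^s
      (such d are automatically coprime to p).

   3. The coprime sum is the full sum minus the sum over multiples d = e p of
      p, and f(p^t / (e p)) = f(p^(t-1) / e). *)

Lemma setgcd_dvd n (A : {set 'I_n}) (x : 'I_n) : x \in A -> setgcd A %| x.+1.
Proof. by move=> xA; rewrite /setgcd (bigD1 x) //= dvdn_gcdl. Qed.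

Lemma setgcd_bounds n (A : {set 'I_n}) : A != set0 -> 0 < setgcd A <= n.
Proof.
case/set0Pn=> x xA; have dx := setgcd_dvd xA.
rewrite (leq_trans (dvdn_leq _ dx)) ?andbT //.
by case: (setgcd A) dx => //; rewrite dvd0n.
Qed.

Lemma scale_ord_subproof n d (i : 'I_(n %/ d)) : (i.+1 * d).-1 < n.
Proof.
case: d i => [|d] i; first by case: i; rewrite divn0.
have le_id : i.+1 * d.+1 <= n %/ d.+1 * d.+1 by rewrite leq_mul2r ltn_ord orbT.
have := leq_divM n d.+1; rewrite mulnS /=; lia.
Qed.

(* Scaling by d: the element i of {1..n/d} is sent to the element i*d of
   {1..n}. *)
Definition scale_ord {n d} (i : 'I_(n %/ d)) : 'I_n := Ordinal (scale_ord_subproof i).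

Lemma scale_ordS n d (i : 'I_(n %/ d)) : 0 < d -> (scale_ord i).+1 = i.+1 * d.
Proof. by move=> d_gt0; rewrite /= prednK // muln_gt0 d_gt0. Qed.

Lemma scale_ord_inj n d : 0 < d -> injective (@scale_ord n d).
Proof.
move=> d_gt0 i j /(congr1 (fun x : 'I_n => (val x).+1)).
by rewrite !scale_ordS // => /eqP; rewrite eqn_pmul2r // eqSS => /eqP/val_inj.
Qed.

Lemma scale_ord_onto n d (x : 'I_n) : 0 < d -> d %| x.+1 ->
  exists i : 'I_(n %/ d), scale_ord i = x.
Proof.
move=> d_gt0 /dvdnP [k xE]; have k_gt0 : 0 < k by case: k xE.
have lt_k : k.-1 < n %/ d by rewrite prednK // leq_divRL // -xE ltn_ord.
by exists (Ordinal lt_k); apply: val_inj; rewrite /= prednK // -xE.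
Qed.

Lemma setgcd_scale n d (B : {set 'I_(n %/ d)}) : 0 < d ->
  setgcd (scale_ord @: B) = setgcd B * d.
Proof.
move=> d_gt0; rewrite /setgcd big_imset /=; last first.
  by move=> i j _ _; apply: scale_ord_inj.
rewrite (big_morph (fun x => x * d) (fun a b => muln_gcdl a b d) (mul0n d)).
by apply: eq_bigr => i _; rewrite scale_ordS.
Qed.

Lemma card_setgcd_eq n d : 0 < d ->
  #|[set A : {set 'I_n} | (A != set0) && (setgcd A == d)]| = f (n %/ d).
Proof.
move=> d_gt0; rewrite /f -(card_imset _ (imset_inj (@scale_ord_inj n d d_gt0))).
apply: eq_card => A; rewrite inE; apply/idP/imsetP.
- case/andP=> An0 /eqP gcdA.
  set B := [set i : 'I_(n %/ d) | scale_ord i \in A].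
  have AE : scale_ord @: B = A.
    apply/setP => x; apply/imsetP/idP => [[i]|xA]; first by rewrite inE => ? ->.
    have dvd_dx : d %| x.+1 by rewrite -gcdA setgcd_dvd.
    have [i iE] := scale_ord_onto d_gt0 dvd_dx.
    by exists i; rewrite /B ?inE iE.
  exists B; last by rewrite AE.
  rewrite inE; apply/andP; split.
    by apply: contra An0 => /eqP B0; rewrite -AE B0 imset0.
  have := setgcd_scale B d_gt0; rewrite AE gcdA -{1}(mul1n d) => /eqP.
  by rewrite eqn_pmul2r // eq_sym.
- case=> B; rewrite inE => /andP [Bn0 /eqP gcdB] ->.
  by rewrite setgcd_scale // gcdB mul1n eqxx andbT imset_eq0.
Qed.

Lemma Mbar_by_gcd n :
  Mbar n = \sum_(1 <= d < n.+1 | coprime d n) f (n %/ d) * gcdn d.-1 n.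
Proof.
rewrite /Mbar (partition_big (fun A : {set 'I_n} => (inord (setgcd A) : 'I_n.+1))
   (fun d : 'I_n.+1 => (0 < d) && coprime d n)); last first.
  move=> A /andP [An0 cA]; have /andP [gcd_gt0 gcd_le] := setgcd_bounds An0.
  by rewrite inordK ?ltnS // gcd_gt0.
rewrite (big_nat_widenl _ 0) // big_mkord.
apply: eq_big => [d|d /andP [d_gt0 cop_dn]]; first by rewrite andbC.
rewrite (eq_bigl (fun A => A \in [set A : {set 'I_n} | (A != set0) && (setgcd A == d)])).
  rewrite (eq_bigr (fun _ => gcdn d.-1 n)) ?sum_nat_const ?card_setgcd_eq //.
  by move=> A; rewrite inE => /andP [_ /eqP ->].
move=> A; rewrite inE; have [->|An0] //= := eqVneq A set0.
have /andP [_ gcd_le] := setgcd_bounds An0.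
rewrite -val_eqE /= inordK ?ltnS //.
by case: eqP => [->|]; rewrite ?cop_dn ?andbF.
Qed.

Lemma geometric_pred p j : 0 < p -> 1 + p.-1 * \sum_(1 <= s < j.+1) p ^ s.-1 = p ^ j.
Proof.
move=> p_gt0; elim: j => [|j IHj]; first by rewrite big_geq // muln0.
rewrite big_nat_recr //= mulnDr addnA IHj expnS.
by case: p p_gt0 {IHj} => [|q] _ //=; lia.
Qed.

Lemma gcdn_pexp_indicator p t k : prime p ->
  gcdn k (p ^ t) = 1 + p.-1 * \sum_(1 <= s < t.+1) p ^ s.-1 * (p ^ s %| k).
Proof.
move=> p_pr; have p_gt1 := prime_gt1 p_pr.
have [j le_jt gcdE] : exists2 j, j <= t & gcdn k (p ^ t) = p ^ j.
  by apply/dvdn_pfactor => //; apply: dvdn_gcdr.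
(* for s <= t, p^s divides k iff it divides gcd(k, p^t) = p^j, iff s <= j *)
have dvdE s : s <= t -> (p ^ s %| k) = (s <= j).
  move=> le_st; rewrite -(dvdn_Pexp2l _ _ p_gt1) -gcdE dvdn_gcd.
  by rewrite dvdn_Pexp2l // le_st andbT.
rewrite gcdE (big_cat_nat _ (n := j.+1)) //=.
rewrite [X in _ * (_ + X)]big1_seq ?addn0; last first.
  move=> s /andP [_]; rewrite mem_index_iota ltnS => /andP [lt_js le_st].
  by rewrite dvdE // leqNgt lt_js muln0.
rewrite -(geometric_pred j (ltnW p_gt1)); congr (1 + p.-1 * _).
apply: eq_big_nat => s /andP [_]; rewrite ltnS => le_sj.
by rewrite dvdE ?le_sj ?muln1 // (leq_trans le_sj le_jt).
Qed.

(* In a block of q consecutive integers each residue mod q occurs once. *)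
Lemma sum_block_residue (F : nat -> nat) q m r : r < q ->
  \sum_(m * q <= i < m.+1 * q | i %% q == r) F i = F (m * q + r).
Proof.
move=> lt_rq; rewrite mulSn addnC -{1}[m * q]add0n big_addn addKn big_mkord.
rewrite (big_pred1 (Ordinal lt_rq)) /=; first by rewrite addnC.
by move=> i /=; rewrite addnC modnMDl modn_small.
Qed.

Lemma sum_residue (F : nat -> nat) q M r : r < q ->
  \sum_(0 <= i < M * q | i %% q == r) F i = \sum_(0 <= m < M) F (m * q + r).
Proof.
move=> lt_rq; rewrite big_mkcond big_nat_mul; apply: eq_bigr => m _.
by rewrite -big_mkcond sum_block_residue.
Qed.

Lemma sum_multiples (F : nat -> nat) q M : 0 < q ->
  \sum_(1 <= d < (M * q).+1 | q %| d) F d = \sum_(1 <= e < M.+1) F (e * q).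
Proof.
move=> q_gt0; rewrite big_add1 /= (eq_bigl (fun i => i %% q == q.-1)); last first.
  move=> i; have qE : q.-1 + 1 = q by rewrite addn1 prednK.
  have -> : (q %| i.+1) = (i + 1 == q.-1 + 1 %[mod q]) by rewrite qE modnn -addn1.
  by rewrite eqn_modDr [q.-1 %% q]modn_small // ltn_predL.
rewrite sum_residue ?ltn_predL // big_add1 /=; apply: eq_bigr => m _.
by rewrite -addnS prednK // -mulSnr.
Qed.

Lemma sum_cong1 (F : nat -> nat) q M : 0 < q ->
  \sum_(1 <= d < (M * q).+1 | q %| d.-1) F d = \sum_(1 <= m < M.+1) F (1 + m.-1 * q).
Proof.
move=> q_gt0; rewrite big_add1 /= (eq_bigl (fun i => i %% q == 0)) // sum_residue //.
by rewrite big_add1 /=; apply: eq_bigr => m _; rewrite addn0 add1n.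
Qed.

Section PrimePower.

Variables (p t : nat) (F : nat -> nat).
Hypothesis p_pr : prime p.

Let p_gt0 : 0 < p := prime_gt0 p_pr.

Lemma sum_not_coprime_pexp : 0 < t ->
  \sum_(1 <= d < (p ^ t).+1 | ~~ coprime d (p ^ t)) F d =
  \sum_(1 <= e < (p ^ t.-1).+1) F (e * p).
Proof.
move=> t_gt0; rewrite (eq_bigl (fun d => p %| d)); last first.
  by move=> d; rewrite coprime_pexpr // coprime_sym prime_coprime // negbK.
by rewrite -{1}(prednK t_gt0) expnSr sum_multiples.
Qed.

Lemma sum_coprime_gcd_pred_pexp :
  \sum_(1 <= d < (p ^ t).+1 | coprime d (p ^ t)) F d * gcdn d.-1 (p ^ t) =
  \sum_(1 <= d < (p ^ t).+1 | coprime d (p ^ t)) F d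
  + p.-1 * \sum_(1 <= s < t.+1) p ^ s.-1 *
      \sum_(1 <= m < (p ^ (t - s)).+1) F (1 + m.-1 * p ^ s).
Proof.
rewrite (eq_bigr (fun d => F d + p.-1 * \sum_(1 <= s < t.+1)
   p ^ s.-1 * ((p ^ s %| d.-1) * F d))); last first.
  move=> d _; rewrite gcdn_pexp_indicator // mulnDr muln1 mulnCA big_distrr /=.
  by congr (_ + _ * _); apply: eq_bigr => s _; lia.
rewrite big_split /= -big_distrr /= exchange_big_nat /=; congr (_ + _ * _).
apply: eq_big_nat => s /andP [s_gt0]; rewrite ltnS => le_st.
rewrite -big_distrr /=; congr (_ * _).
(* d = 1 mod p^s forces d coprime to p, so the coprimality filter is redundant *)
transitivity (\sum_(1 <= d < (p ^ t).+1 | p ^ s %| d.-1) F d).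
  rewrite big_mkcond [RHS]big_mkcond; apply: eq_big_nat => d /andP [d_gt0 _] /=.
  have [dvd_sd|] := boolP (p ^ s %| d.-1); last by rewrite mul0n; case: ifP.
  have cop_dp : coprime d p.
    rewrite -(coprime_pexpr d p s_gt0); apply: coprime_dvdr dvd_sd _.
    by rewrite coprime_sym coprimePn.
  by rewrite coprimeXr // mul1n.
by rewrite -{1}(subnK le_st) expnD sum_cong1 ?expn_gt0 ?p_gt0.
Qed.

End PrimePower.

(* The theorem as an identity of natural numbers (the subtracted sum moved to
   the left-hand side). *)
Lemma Mbar_pexp_nat p t : prime p -> 0 < t ->
  Mbar (p ^ t) + \sum_(1 <= j < (p ^ t.-1).+1) f (p ^ t.-1 %/ j) =
  \sum_(1 <= j < (p ^ t).+1) f (p ^ t %/ j)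
  + p.-1 * \sum_(1 <= s < t.+1) p ^ s.-1 *
       \sum_(1 <= m < (p ^ (t - s)).+1) f (p ^ t %/ (1 + m.-1 * p ^ s)).
Proof.
move=> p_pr t_gt0.
have multE : \sum_(1 <= j < (p ^ t.-1).+1) f (p ^ t.-1 %/ j) =
             \sum_(1 <= d < (p ^ t).+1 | ~~ coprime d (p ^ t)) f (p ^ t %/ d).
  have ptE : p ^ t = p ^ t.-1 * p by rewrite -expnSr prednK.
  rewrite sum_not_coprime_pexp //; apply: eq_bigr => e _.
  by rewrite ptE divnMr ?prime_gt0.
rewrite Mbar_by_gcd sum_coprime_gcd_pred_pexp // multE.
by rewrite [in RHS](bigID (fun d => coprime d (p ^ t))) /= addnAC.
Qed.

Unset Implicit Arguments.
Import GRing.Theory.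
Local Open Scope ring_scope.

Lemma Posz_sum m n (F : nat -> nat) :
  (\sum_(m <= i < n) F i)%N%:Z = \sum_(m <= i < n) (F i)%:Z.
Proof. exact: (big_morph Posz PoszD (erefl 0%:Z)). Qed.

Theorem mainTheorem3 (p t : nat) (hp : prime p) (ht : (1 <= t)%N) :
  (Mbar (p ^ t))%:Z =
    (\sum_(1 <= j < (p ^ t).+1) (f ((p ^ t) %/ j))%:Z)
  - (\sum_(1 <= j < (p ^ t.-1).+1) (f ((p ^ t.-1) %/ j))%:Z)
  + (p.-1)%:Z * (\sum_(1 <= s < t.+1)
        (p ^ s.-1)%:Z * \sum_(1 <= m < (p ^ (t - s)).+1)
            (f ((p ^ t) %/ (1 + (m.-1) * p ^ s)))%:Z).
Proof.
have innerE : \sum_(1 <= s < t.+1) (p ^ s.-1)%:Z *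
      \sum_(1 <= m < (p ^ (t - s)).+1) (f ((p ^ t) %/ (1 + (m.-1) * p ^ s)))%:Z =
    (\sum_(1 <= s < t.+1) p ^ s.-1 * \sum_(1 <= m < (p ^ (t - s)).+1)
        f ((p ^ t) %/ (1 + (m.-1) * p ^ s)))%N%:Z.
  by rewrite Posz_sum; apply: eq_bigr => s _; rewrite PoszM Posz_sum.
have /(congr1 Posz) := Mbar_pexp_nat hp ht.
by rewrite !PoszD PoszM -innerE !Posz_sum; lia.
Qed.
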